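(* Let $n,m$ be integers with $n\geq m\geq 0$. Then $$ gr_{3}(K_{3} : S(n,m))\geq \begin{cases} 5\cdot\frac{n}{2} +1 & \text{ if $n$ is even,}\\ 5\cdot\frac{n-1}{2} + 2 & \text{ if $n$ is odd.} \end{cases} $$
   Context: For integers $n\geq m\geq 0$, the double star $S(n,m)$ is the graph obtained from the disjoint union of the stars $K_{1,n}$ and $K_{1,m}$ by adding an edge between their centers. A $k$-coloring of a graph is an assignment of one of $k$ colors to each edge. A subgraph is rainbow if all its edges have distinct colors and monochromatic if all its edges have the same color. For graphs $G,H$ and a positive integer $k$, the Gallai–Ramsey number $gr_k(G:H)$ is the minimum integer $N$ such that every $k$-coloring of the edges of the complete graph $K_N$ contains either a rainbow copy of $G$ or a monochromatic copy of $H$. *)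

From mathcomp Require Import all_boot.
Set Implicit Arguments. Unset Strict Implicit. Unset Printing Implicit Defensive.

(* A k-coloring of the edges of K_N (vertices 'I_N): a symmetric map
   c : 'I_N -> 'I_N -> 'I_k; the values c x x are irrelevant. *)
Definition edge_coloring (N k : nat) (c : 'I_N -> 'I_N -> 'I_k) : Prop :=
  forall x y : 'I_N, c x y = c y x.

(* A (simple) graph is a finite type V with an adjacency relation E
   (we use symmetric irreflexive relations below). A copy of (V,E) in K_N is
   an injective map f : V -> 'I_N. *)

Definition has_rainbow_copy (N k : nat) (c : 'I_N -> 'I_N -> 'I_k)
    (V : finType) (E : rel V) : Prop :=
  exists f : V -> 'I_N, injective f /\
    forall x y x' y' : V, E x y -> E x' y' ->
      c (f x) (f y) = c (f x') (f y') ->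
      (x = x' /\ y = y') \/ (x = y' /\ y = x').

Definition has_mono_copy (N k : nat) (c : 'I_N -> 'I_N -> 'I_k)
    (V : finType) (E : rel V) : Prop :=
  exists f : V -> 'I_N, injective f /\
    exists col : 'I_k, forall x y : V, E x y -> c (f x) (f y) = col.

Definition gr_property (k : nat) (VG : finType) (G : rel VG)
    (VH : finType) (H : rel VH) (N : nat) : Prop :=
  forall c : 'I_N -> 'I_N -> 'I_k, edge_coloring c ->
    has_rainbow_copy c G \/ has_mono_copy c H.

(* gr_k(G:H) >= L, i.e. the minimum N with gr_property is at least L
   (stated without presupposing that such an N exists). *)
Definition gr_ge (k : nat) (VG : finType) (G : rel VG)
    (VH : finType) (H : rel VH) (L : nat) : Prop :=
  forall N : nat, gr_property k G H N -> L <= N.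

Definition K3 : rel 'I_3 := fun x y => x != y.

(* The double star S(n,m) on vertices 'I_(n+m+2): vertex 0 and vertex 1 are
   the adjacent centers; vertices 2..n+1 are the n leaves of center 0, and
   vertices n+2..n+m+1 are the m leaves of center 1. *)
Definition dstar_arc (n m : nat) (x y : 'I_(n + m + 2)) : bool :=
  [|| (val x == 0) && (val y == 1),
      (val x == 0) && (2 <= val y < n + 2)
    | (val x == 1) && (n + 2 <= val y)].

Definition double_star (n m : nat) : rel 'I_(n + m + 2) :=
  fun x y => @dstar_arc n m x y || @dstar_arc n m y x.

(* The bound comes from a blow-up of K_5.  Split the vertices of K_N into the
   five residue classes mod 5 and color an edge 2 inside a class, 0 between
   cyclically adjacent classes and 1 between the other pairs.  Any triangle
   repeats a color, so there is no rainbow K_3.  Write n = 2t + b with b <= 1;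
   when N <= 5t + b, every color seen from a vertex covers at most two residue
   classes, hence at most 2t + b = n vertices, whereas one centre of a
   monochromatic S(n,m) sees n + 1 vertices in its color. *)

From mathcomp Require Import all_boot zify.

Set Implicit Arguments.
Unset Strict Implicit.
Unset Printing Implicit Defensive.

Definition pentagon_color (a b : nat) : 'I_3 :=
  if a == b then @Ordinal 3 2 isT
  else if (a + 5 - b) %% 5 \in [:: 1; 4] then @Ordinal 3 0 isT else @Ordinal 3 1 isT.

Lemma pentagon_colorC a b :
  a < 5 -> b < 5 -> pentagon_color a b = pentagon_color b a.
Proof. by do 5?[case: a => [|a]] => //; do 5?[case: b => [|b]]. Qed.

Lemma pentagon_no_rainbow a b c : a < 5 -> b < 5 -> c < 5 ->
  [|| pentagon_color a b == pentagon_color b c,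
      pentagon_color b c == pentagon_color a c
    | pentagon_color a b == pentagon_color a c].
Proof.
by do 5?[case: a => [|a]] => //; do 5?[case: b => [|b]] => //;
  do 5?[case: c => [|c]].
Qed.

Lemma pentagon_color_count a (col : 'I_3) : a < 5 ->
  count (fun w => pentagon_color a w == col) (iota 0 5) <= 2.
Proof. by case: col => -[|[|[|//]]] ?; do 5?[case: a => [|a]]. Qed.

Definition blowup_color (N : nat) (x y : 'I_N) : 'I_3 :=
  pentagon_color (x %% 5) (y %% 5).

Lemma blowup_color_sym N : edge_coloring (@blowup_color N).
Proof. by move=> x y; rewrite /blowup_color pentagon_colorC ?ltn_pmod. Qed.

Lemma rainbow_K3_triangle N k (c : 'I_N -> 'I_N -> 'I_k) :
  has_rainbow_copy c K3 ->
  exists x y z, [/\ c x y != c y z, c y z != c x z & c x y != c x z].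
Proof.
case=> f [_ rainbow_f].
pose o0 := @Ordinal 3 0 isT; pose o1 := @Ordinal 3 1 isT; pose o2 := @Ordinal 3 2 isT.
exists (f o0), (f o1), (f o2); split; apply/eqP.
- by move/(rainbow_f o0 o1 o1 o2 isT isT) => -[] [].
- by move/(rainbow_f o1 o2 o0 o2 isT isT) => -[] [].
- by move/(rainbow_f o0 o1 o0 o2 isT isT) => -[] [].
Qed.

Lemma blowup_no_rainbow_K3 N : ~ has_rainbow_copy (@blowup_color N) K3.
Proof.
move/rainbow_K3_triangle => [x [y [z []]]]; rewrite /blowup_color.
have lt5 (u : 'I_N) : u %% 5 < 5 by rewrite ltn_mod.
have := pentagon_no_rainbow (lt5 x) (lt5 y) (lt5 z).
by case/or3P=> /eqP ->; rewrite eqxx.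
Qed.

Lemma mono_double_star_color_degree N k (c : 'I_N -> 'I_N -> 'I_k) n m :
  has_mono_copy c (@double_star n m) ->
  exists v col, n < #|[pred w | c v w == col]|.
Proof.
case=> f [inj_f [col mono_f]].
have lt0 : 0 < n + m + 2 by rewrite addn2.
have ltS (i : 'I_n.+1) : i.+1 < n + m + 2 by have := ltn_ord i; lia.
pose leaf (i : 'I_n.+1) := f (Ordinal (ltS i)).
have inj_leaf : injective leaf by move=> i j /inj_f [] /val_inj.
exists (f (Ordinal lt0)), col.
rewrite -[n.+1]card_ord -(card_image inj_leaf); apply/subset_leq_card/subsetP.
move=> _ /imageP [i _ ->]; rewrite inE; apply/eqP/mono_f.
rewrite /double_star /dstar_arc /=; case: i => -[|i] lti //=.
by rewrite !orbF addn2.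
Qed.

Lemma card_ord_count N (P : pred nat) :
  #|[pred i : 'I_N | P i]| = count P (iota 0 N).
Proof. by rewrite cardE /enum_mem size_filter -enumT -val_enum_ord count_map. Qed.

Lemma count_iota_mod_block d a (P : pred nat) :
  count (fun w => P (w %% d)) (iota (d * a) d) = count P (iota 0 d).
Proof.
rewrite -[d * a]addn0 iotaDl count_map; apply: eq_in_count => w.
by rewrite mem_iota /= mulnC modnMDl => /modn_small ->.
Qed.

Lemma count_iota_mod d t (P : pred nat) :
  count (fun w => P (w %% d)) (iota 0 (d * t)) = t * count P (iota 0 d).
Proof.
elim: t => [|t IHt]; first by rewrite muln0.
by rewrite mulnS addnC iotaD count_cat IHt count_iota_mod_block mulSn addnC.
Qed.

Lemma count_iota_mod_le d t b N (P : pred nat) : N <= d * t + b ->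
  count (fun w => P (w %% d)) (iota 0 N) <= t * count P (iota 0 d) + b.
Proof.
move=> le_N; rewrite -count_iota_mod.
apply: (@leq_trans (count (fun w => P (w %% d)) (iota 0 (d * t + b)))).
  by rewrite -(subnKC le_N) iotaD count_cat leq_addr.
by rewrite iotaD count_cat leq_add2l (leq_trans (count_size _ _)) ?size_iota.
Qed.

Lemma blowup_color_degree N t b (v : 'I_N) (col : 'I_3) : N <= 5 * t + b ->
  #|[pred w | blowup_color v w == col]| <= 2 * t + b.
Proof.
move=> le_N; pose P r := pentagon_color (v %% 5) r == col.
rewrite (card_ord_count N (fun w => P (w %% 5))).
apply: leq_trans (count_iota_mod_le P le_N) _.
by rewrite leq_add2r mulnC leq_mul2r pentagon_color_count ?orbT // ltn_mod.
Qed.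

Theorem lemma1 (n m : nat) (hmn : m <= n) :
  gr_ge 3 K3 (@double_star n m)
    (if odd n then 5 * ((n - 1) %/ 2) + 2 else 5 * (n %/ 2) + 1).
Proof.
move=> N gr_N; rewrite leqNgt; apply/negP => lt_N.
have n_eq : n = 2 * (n %/ 2) + odd n by rewrite mulnC -modn2 -divn_eq.
have le_N : N <= 5 * (n %/ 2) + odd n.
  by move: lt_N n_eq; case: (odd n); move: (n %/ 2); lia.
case: (gr_N _ (@blowup_color_sym N)) => [/blowup_no_rainbow_K3 // |].
case/mono_double_star_color_degree => v [col]; apply/negP; rewrite -leqNgt n_eq.
exact: blowup_color_degree.
Qed.
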